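(* Let $Q\in\mathbb{Z}[x_1,\dots,x_n]$ be an integral form with $\alpha_Q>2$. Then $q^{1-n}|V_\lambda(q)|\lesssim1$ uniformly in integers $q\ge1$ and $\lambda\in\mathbb{Z}$.
   Context: $e(t)=e^{2\pi it}$, $Z_q=\mathbb{Z}/q\mathbb{Z}$, $U_q=Z_q^*$ ($U_1=Z_1=\{0\}$). $V_\lambda(q)=\{s\in Z_q^n: Q(s)\equiv\lambda\ (\mathrm{mod}\ q)\}$. $F_q(a,\mathbf{a})=q^{-n}\sum_{s\in Z_q^n}e(Q(s)a/q+s\cdot\mathbf{a}/q)$ and $\alpha_Q=\sup\{\beta\ge0:\ \sup_{q\ge1}\sup_{a\in U_q,\ \mathbf{a}\in Z_q^n}q^\beta|F_q(a,\mathbf{a})|<\infty\}$. *)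

From Stdlib Require Import Reals ZArith List.
Import ListNotations.
Open Scope R_scope.

(* An integral polynomial in n variables, as a list of monomials
   (coefficient, exponent vector). *)
Definition zpoly := list (Z * list nat).

Fixpoint mono_eval (e : list nat) (s : list Z) : Z :=
  match e, s with
  | k :: e', x :: s' => (x ^ Z.of_nat k * mono_eval e' s')%Z
  | _, _ => 1%Z
  end.

Definition poly_eval (Q : zpoly) (s : list Z) : Z :=
  fold_right (fun m acc => (fst m * mono_eval (snd m) s + acc)%Z) 0%Z Q.

Definition is_form (n : nat) (Q : zpoly) : Prop :=
  exists d : nat, forall m, In m Q ->
    length (snd m) = n /\ fold_right plus 0%nat (snd m) = d.

Definition Zq (q : nat) : list Z := map Z.of_nat (seq 0 q).

Fixpoint Zqn (n q : nat) : list (list Z) :=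
  match n with
  | O => [ [] ]
  | S n' => flat_map (fun x => map (cons x) (Zqn n' q)) (Zq q)
  end.

(* U_q: units of Z_q (for q = 1 this is {0}, since gcd(0,1) = 1). *)
Definition in_Uq (q : nat) (a : Z) : Prop :=
  (0 <= a < Z.of_nat q)%Z /\ Z.gcd a (Z.of_nat q) = 1%Z.

Definition dotZ (s t : list Z) : Z :=
  fold_right Z.add 0%Z (map (fun p => (fst p * snd p)%Z) (combine s t)).

(* e(t) = exp(2 pi i t) = cos(2 pi t) + i sin(2 pi t). *)
Definition phase (Q : zpoly) (q : nat) (a : Z) (av s : list Z) : R :=
  2 * PI * (IZR (poly_eval Q s * a + dotZ s av) / INR q).

(* Real and imaginary parts of F_q(a, av) and its modulus. *)
Definition F_re (n : nat) (Q : zpoly) (q : nat) (a : Z) (av : list Z) : R :=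
  / (INR q ^ n) * fold_right Rplus 0 (map (fun s => cos (phase Q q a av s)) (Zqn n q)).
Definition F_im (n : nat) (Q : zpoly) (q : nat) (a : Z) (av : list Z) : R :=
  / (INR q ^ n) * fold_right Rplus 0 (map (fun s => sin (phase Q q a av s)) (Zqn n q)).
Definition F_abs (n : nat) (Q : zpoly) (q : nat) (a : Z) (av : list Z) : R :=
  sqrt (F_re n Q q a av ^ 2 + F_im n Q q a av ^ 2).

(* beta belongs to the set whose supremum is alpha_Q. *)
Definition alpha_admissible (n : nat) (Q : zpoly) (beta : R) : Prop :=
  0 <= beta /\
  exists C : R, forall (q : nat) (a : Z) (av : list Z),
    (1 <= q)%nat -> in_Uq q a -> In av (Zqn n q) ->
    Rpower (INR q) beta * F_abs n Q q a av <= C.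

(* alpha_Q > c  iff  sup{beta >= 0 : admissible} > c
   iff some admissible beta exceeds c (alpha_Q may be +infinity). *)
Definition alpha_gt (n : nat) (Q : zpoly) (c : R) : Prop :=
  exists beta, c < beta /\ alpha_admissible n Q beta.

Definition V_card (n : nat) (Q : zpoly) (lam : Z) (q : nat) : nat :=
  length (filter (fun s => Z.eqb (Z.modulo (poly_eval Q s - lam) (Z.of_nat q)) 0)
                 (Zqn n q)).

(* Detect the congruence Q(s) = lam (mod q) with additive characters:
     q |V_lam(q)| = sum_(a in Z_q) sum_(s in Z_q^n) cos (2 pi a (Q(s) - lam) / q).
   For each a the inner sum is the real part of a unimodular multiple of
   q^n F_q(a, 0), so it is at most q^n |F_q(a, 0)|.  Writing a/q = a'/d in lowest
   terms (d = q / gcd(a, q), a' a unit mod d) gives F_q(a, 0) = F_d(a', 0), and an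
   admissible exponent beta = 2 + eps bounds this by C d^(-beta).  At most d
   residues a have reduced denominator d, so the sum over a is at most
   C sum_(d <= q) d^(-1-eps) <= C (1 + 1/eps), which gives the bound. *)

From Stdlib Require Import Reals ZArith List Lra Lia.
Import ListNotations.
Open Scope R_scope.

Definition sumR {A} (f : A -> R) (l : list A) : R := fold_right Rplus 0 (map f l).

Lemma sumR_nil {A} (f : A -> R) : sumR f [] = 0.
Proof. reflexivity. Qed.

Lemma sumR_cons {A} (f : A -> R) x l : sumR f (x :: l) = f x + sumR f l.
Proof. reflexivity. Qed.

Lemma sumR_app {A} (f : A -> R) l1 l2 : sumR f (l1 ++ l2) = sumR f l1 + sumR f l2.
Proof. induction l1 as [|x l1 IH]; simpl; [unfold sumR; simpl; lra|]. rewrite !sumR_cons, IH; ring. Qed.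

Lemma sumR_ext_in {A} (f g : A -> R) l :
  (forall x, In x l -> f x = g x) -> sumR f l = sumR g l.
Proof.
  induction l as [|x l IH]; intros H; [reflexivity|].
  rewrite !sumR_cons, H by (simpl; auto). rewrite IH; [reflexivity|].
  intros; apply H; simpl; auto.
Qed.

Lemma sumR_le_in {A} (f g : A -> R) l :
  (forall x, In x l -> f x <= g x) -> sumR f l <= sumR g l.
Proof.
  induction l as [|x l IH]; intros H; [unfold sumR; simpl; lra|].
  rewrite !sumR_cons.
  assert (f x <= g x) by (apply H; simpl; auto).
  assert (sumR f l <= sumR g l) by (apply IH; intros; apply H; simpl; auto).
  lra.
Qed.

Lemma sumR_plus {A} (f g : A -> R) l : sumR (fun x => f x + g x) l = sumR f l + sumR g l.
Proof. induction l; [unfold sumR; simpl; lra|]. rewrite !sumR_cons, IHl; ring. Qed.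

Lemma sumR_scal {A} (c : R) (f : A -> R) l : sumR (fun x => c * f x) l = c * sumR f l.
Proof. induction l; [unfold sumR; simpl; lra|]. rewrite !sumR_cons, IHl; ring. Qed.

Lemma sumR_const {A} (c : R) l : sumR (fun _ : A => c) l = INR (length l) * c.
Proof. induction l; [unfold sumR; simpl; lra|]. rewrite sumR_cons, IHl, length_cons, S_INR; ring. Qed.

Lemma sumR_map {A B} (f : B -> R) (h : A -> B) l : sumR f (map h l) = sumR (fun x => f (h x)) l.
Proof. unfold sumR. rewrite map_map. reflexivity. Qed.

Lemma sumR_flat_map {A B} (f : B -> R) (F : A -> list B) l :
  sumR f (flat_map F l) = sumR (fun x => sumR f (F x)) l.
Proof. induction l; [reflexivity|]. simpl flat_map. rewrite sumR_app, sumR_cons, IHl; reflexivity. Qed.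

Lemma sumR_swap {A B} (F : A -> B -> R) l m :
  sumR (fun x => sumR (fun y => F x y) m) l = sumR (fun y => sumR (fun x => F x y) l) m.
Proof.
  induction l as [|x l IH].
  - symmetry. exact (eq_trans (sumR_const 0 m) (Rmult_0_r _)).
  - rewrite sumR_cons, IH, <- sumR_plus. apply sumR_ext_in. intros; rewrite sumR_cons; reflexivity.
Qed.

Lemma length_filter_sumR {A} (p : A -> bool) l :
  INR (length (filter p l)) = sumR (fun s => if p s then 1 else 0) l.
Proof.
  induction l as [|x l IH]; [reflexivity|].
  simpl. rewrite sumR_cons. destruct (p x); simpl length; [rewrite S_INR|]; rewrite IH; ring.
Qed.

Lemma sumR_point_mass s k x (f : nat -> R) : (s <= x < s + k)%nat ->
  sumR (fun e => if Nat.eqb e x then f e else 0) (seq s k) = f x.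
Proof.
  revert s; induction k as [|k IH]; intros s H; [lia|]. simpl seq. rewrite sumR_cons.
  destruct (Nat.eqb_spec s x).
  - subst. rewrite (sumR_ext_in _ (fun _ => 0)), sumR_const; [ring|].
    intros y Hy. apply in_seq in Hy. destruct (Nat.eqb_spec y x); [lia|auto].
  - rewrite IH by lia. ring.
Qed.

Lemma in_Zq q a : In a (Zq q) -> (0 <= a < Z.of_nat q)%Z.
Proof. unfold Zq. intros H. apply in_map_iff in H. destruct H as [k [<- Hk]]. apply in_seq in Hk. lia. Qed.

Lemma Zq_S q : Zq (S q) = Zq q ++ [Z.of_nat q].
Proof. unfold Zq. rewrite seq_S, map_app. reflexivity. Qed.

Lemma Zq_add a b : Zq (a + b) = Zq a ++ map (fun j => Z.of_nat (a + j)) (seq 0 b).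
Proof.
  unfold Zq. rewrite seq_app, map_app. f_equal. simpl.
  rewrite <- (map_map (fun j => (a + j)%nat) Z.of_nat). f_equal.
  replace a with (a + 0)%nat at 1 by lia. generalize 0%nat.
  induction b as [|b IH]; intros s; simpl; [reflexivity|]. f_equal. rewrite <- IH. f_equal; lia.
Qed.

Lemma zero_in_Zqn n q : (1 <= q)%nat -> In (repeat 0%Z n) (Zqn n q).
Proof.
  intros Hq. induction n as [|n IH]; simpl; auto.
  apply in_flat_map. exists 0%Z. split; [|apply in_map; auto].
  unfold Zq. apply in_map_iff. exists 0%nat. split; auto. apply in_seq. lia.
Qed.

Lemma shift_2PI_Z (f : R -> R) :
  (forall x, f (x + 2 * PI) = f x) -> forall x z, f (x + 2 * PI * IZR z) = f x.
Proof.
  intros Hf.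
  assert (Hnat : forall x k, f (x + 2 * PI * INR k) = f x).
  { intros x k. induction k as [|k IH].
    - simpl. f_equal. ring.
    - rewrite S_INR. replace (x + 2 * PI * (INR k + 1)) with (x + 2 * PI * INR k + 2 * PI) by ring.
      rewrite Hf. exact IH. }
  intros x z. destruct (Z_le_gt_dec 0 z).
  - rewrite <- (Z2Nat.id z), <- INR_IZR_INZ by lia. apply Hnat.
  - replace z with (- Z.of_nat (Z.to_nat (- z)))%Z by lia.
    rewrite opp_IZR, <- INR_IZR_INZ.
    rewrite <- (Hnat (x + 2 * PI * - INR (Z.to_nat (- z))) (Z.to_nat (- z))).
    f_equal. ring.
Qed.

Lemma cos_shift_2PI x : cos (x + 2 * PI) = cos x.
Proof. rewrite <- (cos_period x 1). f_equal. simpl. ring. Qed.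

Lemma sin_shift_2PI x : sin (x + 2 * PI) = sin x.
Proof. rewrite <- (sin_period x 1). f_equal. simpl. ring. Qed.

Lemma phase_mod (f : R -> R) (k k' : Z) (d : nat) :
  (forall x, f (x + 2 * PI) = f x) -> (1 <= d)%nat ->
  (k mod Z.of_nat d = k' mod Z.of_nat d)%Z ->
  f (2 * PI * (IZR k / INR d)) = f (2 * PI * (IZR k' / INR d)).
Proof.
  intros Hf Hd Hkk'.
  assert (Hsplit : forall m : Z, 2 * PI * (IZR m / INR d)
            = 2 * PI * (IZR (m mod Z.of_nat d) / INR d) + 2 * PI * IZR (m / Z.of_nat d)).
  { intros m. assert (INR d <> 0) by (apply not_0_INR; lia).
    rewrite (Z.div_mod m (Z.of_nat d)) at 1 by lia.
    rewrite plus_IZR, mult_IZR, <- INR_IZR_INZ. field. auto. }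
  rewrite (Hsplit k), (Hsplit k'), Hkk', !(shift_2PI_Z f Hf). reflexivity.
Qed.

Lemma cos_sum_telescope x k :
  2 * sin (x / 2) * sumR (fun a => cos (IZR a * x)) (Zq k) = sin ((INR k - / 2) * x) + sin (x / 2).
Proof.
  induction k as [|k IH].
  - unfold Zq. simpl. rewrite sumR_nil.
    replace ((0 - / 2) * x) with (- (x / 2)) by field. rewrite sin_neg. ring.
  - rewrite Zq_S, sumR_app, Rmult_plus_distr_l, IH, sumR_cons, sumR_nil, <- INR_IZR_INZ, S_INR.
    replace ((INR k + 1 - / 2) * x) with (INR k * x + x / 2) by field.
    replace ((INR k - / 2) * x) with (INR k * x - x / 2) by field.
    rewrite sin_plus, sin_minus. ring.
Qed.

Lemma character_orthogonality (q : nat) (m : Z) : (1 <= q)%nat ->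
  sumR (fun a => cos (2 * PI * (IZR (a * m) / INR q))) (Zq q)
  = if Z.eqb (m mod Z.of_nat q) 0 then INR q else 0.
Proof.
  intros Hq. assert (Hq' : INR q <> 0) by (apply not_0_INR; lia).
  destruct (Z.eqb_spec (m mod Z.of_nat q) 0) as [Hdiv|Hndiv].
  - rewrite (sumR_ext_in _ (fun _ => 1)), sumR_const.
    + unfold Zq. rewrite length_map, length_seq. ring.
    + intros a _. rewrite (phase_mod cos _ 0 q cos_shift_2PI Hq), Rdiv_0_l, Rmult_0_r; [apply cos_0|].
      rewrite Zmod_0_l, Z.mul_mod, Hdiv, Z.mul_0_r by lia. apply Zmod_0_l.
  - set (x := 2 * PI * (IZR m / INR q)).
    rewrite (sumR_ext_in _ (fun a => cos (IZR a * x))).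
    2:{ intros a _. f_equal. unfold x. rewrite mult_IZR. field. auto. }
    assert (Hsin : sin (x / 2) <> 0).
    { intros Hs. apply sin_eq_0_0 in Hs. destruct Hs as [k Hk]. apply Hndiv.
      assert (Hm : IZR m = IZR k * INR q).
      { apply Rmult_eq_reg_r with (PI / INR q).
        - transitivity (x / 2); [unfold x; field; auto|]. rewrite Hk. field. auto.
        - apply Rmult_integral_contrapositive. split; [apply PI_neq0|apply Rinv_neq_0_compat; auto]. }
      rewrite INR_IZR_INZ, <- mult_IZR in Hm. apply eq_IZR in Hm. rewrite Hm. apply Z.mod_mul. lia. }
    assert (Hend : sin ((INR q - / 2) * x) = - sin (x / 2)).
    { replace ((INR q - / 2) * x) with (- (x / 2) + 2 * PI * IZR m)
        by (unfold x; field; auto).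
      rewrite (shift_2PI_Z sin sin_shift_2PI), sin_neg. reflexivity. }
    pose proof (cos_sum_telescope x q) as T. rewrite Hend in T.
    apply Rmult_eq_reg_l with (2 * sin (x / 2)); [rewrite T; ring|]. intro; apply Hsin; lra.
Qed.

Lemma V_card_characters n Q lam q : (1 <= q)%nat ->
  INR q * INR (V_card n Q lam q) =
  sumR (fun a => sumR (fun s => cos (2 * PI * (IZR (a * (poly_eval Q s - lam)) / INR q)))
                      (Zqn n q)) (Zq q).
Proof.
  intros Hq. unfold V_card. rewrite length_filter_sumR, <- sumR_scal, <- sumR_swap.
  apply sumR_ext_in. intros s _. rewrite character_orthogonality by auto.
  destruct (Z.eqb _ _); ring.
Qed.

Definition reduce_mod (d : nat) (s : list Z) : list Z := map (fun x => (x mod Z.of_nat d)%Z) s.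

Lemma reduce_mod_idem d s : (1 <= d)%nat -> reduce_mod d (reduce_mod d s) = reduce_mod d s.
Proof. intros Hd. unfold reduce_mod. rewrite map_map. apply map_ext. intros; apply Z.mod_mod; lia. Qed.

Lemma sum_Zq_periodic (g d : nat) (h : Z -> R) : (1 <= d)%nat ->
  (forall x, h x = h (x mod Z.of_nat d)%Z) -> sumR h (Zq (g * d)) = INR g * sumR h (Zq d).
Proof.
  intros Hd Hh. induction g as [|g IH].
  - unfold Zq. simpl. rewrite sumR_nil. ring.
  - rewrite Nat.mul_succ_l, Zq_add, sumR_app, IH, sumR_map, S_INR.
    assert (Hblock : sumR (fun x => h (Z.of_nat (g * d + x))) (seq 0 d) = sumR h (Zq d)).
    { unfold Zq. rewrite sumR_map. apply sumR_ext_in. intros j _.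
      rewrite Hh, (Hh (Z.of_nat j)), Nat2Z.inj_add, Nat2Z.inj_mul, Z.add_comm, Z.mod_add by lia.
      reflexivity. }
    rewrite Hblock. ring.
Qed.

Lemma sum_Zqn_periodic n (g d : nat) (h : list Z -> R) : (1 <= d)%nat ->
  (forall s, h s = h (reduce_mod d s)) -> sumR h (Zqn n (g * d)) = INR g ^ n * sumR h (Zqn n d).
Proof.
  intros Hd. revert h. induction n as [|n IH]; intros h Hh; [simpl; ring|].
  simpl Zqn. rewrite !sumR_flat_map.
  rewrite (sumR_ext_in (fun x => sumR h (map (cons x) (Zqn n (g * d))))
                       (fun x => INR g ^ n * sumR (fun t => h (x :: t)) (Zqn n d))).
  2:{ intros x _. rewrite sumR_map. apply IH. intros s.
      rewrite Hh, (Hh (x :: reduce_mod d s)). unfold reduce_mod at 1 3; simpl.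
      fold (reduce_mod d s). rewrite reduce_mod_idem; auto. }
  rewrite sumR_scal, sumR_swap.
  rewrite (sumR_ext_in (fun t => sumR (fun x => h (x :: t)) (Zq (g * d)))
                       (fun t => INR g * sumR (fun x => h (x :: t)) (Zq d))).
  2:{ intros t _. apply sum_Zq_periodic; auto. intros x.
      rewrite Hh, (Hh ((x mod Z.of_nat d)%Z :: t)). unfold reduce_mod; simpl.
      rewrite Z.mod_mod by lia. reflexivity. }
  rewrite sumR_scal, (sumR_ext_in (fun x => sumR h (map (cons x) (Zqn n d)))
                                  (fun x => sumR (fun t => h (x :: t)) (Zqn n d)))
    by (intros; apply sumR_map).
  rewrite (sumR_swap (fun x t => h (x :: t))). simpl. ring.
Qed.

Lemma mono_eval_mod d e s : (1 <= d)%nat ->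
  (mono_eval e (reduce_mod d s) mod Z.of_nat d = mono_eval e s mod Z.of_nat d)%Z.
Proof.
  intros Hd. revert s. induction e as [|k e IH]; intros s; destruct s as [|x s]; simpl; auto.
  rewrite Z.mul_mod, IH, <- Zpow_facts.Zpower_mod, <- Z.mul_mod by lia. reflexivity.
Qed.

Lemma poly_eval_mod d Q s : (1 <= d)%nat ->
  (poly_eval Q (reduce_mod d s) mod Z.of_nat d = poly_eval Q s mod Z.of_nat d)%Z.
Proof.
  intros Hd. induction Q as [|m Q IH]; simpl; auto. unfold poly_eval in *; simpl.
  rewrite Z.add_mod, IH, Z.mul_mod, mono_eval_mod, <- Z.mul_mod, <- Z.add_mod by lia.
  reflexivity.
Qed.

Lemma dotZ_zero n s : dotZ s (repeat 0%Z n) = 0%Z.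
Proof. revert s. induction n; intros s; destruct s; unfold dotZ in *; simpl; auto. rewrite IHn. lia. Qed.

Lemma phase_zero_freq Q q a n s :
  phase Q q a (repeat 0%Z n) s = 2 * PI * (IZR (poly_eval Q s * a) / INR q).
Proof. unfold phase. rewrite dotZ_zero, Z.add_0_r. reflexivity. Qed.

Lemma phase_sum_lowest_terms (f : R -> R) n Q (g d : nat) a :
  (forall x, f (x + 2 * PI) = f x) -> (1 <= g)%nat -> (1 <= d)%nat ->
  / INR (g * d) ^ n * sumR (fun s => f (phase Q (g * d) (Z.of_nat g * a) (repeat 0%Z n) s))
                           (Zqn n (g * d))
  = / INR d ^ n * sumR (fun s => f (phase Q d a (repeat 0%Z n) s)) (Zqn n d).
Proof.
  intros Hf Hg Hd.
  assert (INR g <> 0) by (apply not_0_INR; lia). assert (INR d <> 0) by (apply not_0_INR; lia).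
  set (h := fun s => f (2 * PI * (IZR (poly_eval Q s * a) / INR d))).
  rewrite (sumR_ext_in _ h), (sumR_ext_in (fun s => f (phase Q d a _ s)) h).
  - rewrite sum_Zqn_periodic, mult_INR, Rpow_mult_distr; auto.
    + field. split; apply pow_nonzero; auto.
    + intros s. unfold h. apply phase_mod; auto.
      rewrite Z.mul_mod, (Z.mul_mod (poly_eval Q (reduce_mod d s))), poly_eval_mod by lia.
      reflexivity.
  - intros s _. rewrite phase_zero_freq. reflexivity.
  - intros s _. rewrite phase_zero_freq. unfold h. f_equal.
    rewrite mult_INR, !mult_IZR, <- INR_IZR_INZ. field. auto.
Qed.

Lemma F_abs_lowest_terms n Q (g d : nat) a : (1 <= g)%nat -> (1 <= d)%nat ->
  F_abs n Q (g * d) (Z.of_nat g * a) (repeat 0%Z n) = F_abs n Q d a (repeat 0%Z n).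
Proof.
  intros Hg Hd. unfold F_abs, F_re, F_im.
  change (fold_right Rplus 0 (map ?f ?l)) with (sumR f l).
  rewrite (phase_sum_lowest_terms cos), (phase_sum_lowest_terms sin);
    auto using cos_shift_2PI, sin_shift_2PI.
Qed.

Lemma unit_vector_dot_le c s A B : c ^ 2 + s ^ 2 = 1 -> c * A + s * B <= sqrt (A ^ 2 + B ^ 2).
Proof.
  intros H. apply Rle_trans with (Rabs (c * A + s * B)); [apply Rle_abs|].
  rewrite <- (sqrt_pow2 (Rabs (c * A + s * B))) by apply Rabs_pos.
  apply sqrt_le_1_alt. rewrite pow2_abs.
  assert (0 <= (c * B - s * A) ^ 2) by apply pow2_ge_0.
  replace (A ^ 2 + B ^ 2) with ((c ^ 2 + s ^ 2) * (A ^ 2 + B ^ 2)) by (rewrite H; ring). nra.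
Qed.

(* The character sum at frequency a is the real part of e(-a lam / q) q^n F_q(a, 0),
   hence at most q^n |F_q(a, 0)|. *)
Lemma character_sum_le_F_abs n Q lam q a : (1 <= q)%nat ->
  sumR (fun s => cos (2 * PI * (IZR (a * (poly_eval Q s - lam)) / INR q))) (Zqn n q)
  <= INR q ^ n * F_abs n Q q a (repeat 0%Z n).
Proof.
  intros Hq. assert (Hq' : INR q <> 0) by (apply not_0_INR; lia).
  assert (HQ : 0 < INR q ^ n) by (apply pow_lt, lt_0_INR; lia).
  set (phi := 2 * PI * (IZR (a * lam) / INR q)).
  set (A := sumR (fun s => cos (phase Q q a (repeat 0%Z n) s)) (Zqn n q)).
  set (B := sumR (fun s => sin (phase Q q a (repeat 0%Z n) s)) (Zqn n q)).
  rewrite (sumR_ext_in _ (fun s => cos phi * cos (phase Q q a (repeat 0%Z n) s)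
                                 + sin phi * sin (phase Q q a (repeat 0%Z n) s))).
  2:{ intros s _. rewrite phase_zero_freq.
      replace (2 * PI * (IZR (a * (poly_eval Q s - lam)) / INR q))
        with (2 * PI * (IZR (poly_eval Q s * a) / INR q) - phi)
        by (unfold phi; rewrite !mult_IZR, minus_IZR; field; auto).
      rewrite cos_minus. ring. }
  rewrite sumR_plus, !sumR_scal. fold A B.
  assert (HF : F_abs n Q q a (repeat 0%Z n) = / INR q ^ n * sqrt (A ^ 2 + B ^ 2)).
  { unfold F_abs, F_re, F_im. change (fold_right Rplus 0 (map ?f ?l)) with (sumR f l). fold A B.
    replace ((/ INR q ^ n * A) ^ 2 + (/ INR q ^ n * B) ^ 2) with ((/ INR q ^ n) ^ 2 * (A ^ 2 + B ^ 2))
      by ring.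
    rewrite sqrt_mult_alt, sqrt_pow2; [reflexivity| |apply pow2_ge_0].
    left. apply Rinv_0_lt_compat. auto. }
  rewrite HF, <- Rmult_assoc, Rinv_r, Rmult_1_l by lra.
  apply unit_vector_dot_le. pose proof (sin2_cos2 phi) as H. unfold Rsqr in H. lra.
Qed.

Definition denom (q : nat) (a : Z) : nat := Z.to_nat (Z.of_nat q / Z.gcd a (Z.of_nat q)).

Lemma lowest_terms (q : nat) (a : Z) : (1 <= q)%nat -> In a (Zq q) ->
  exists (g : nat) (a' : Z),
    (1 <= g)%nat /\ q = (g * denom q a)%nat /\ a = (Z.of_nat g * a')%Z /\ in_Uq (denom q a) a'.
Proof.
  intros Hq Hin. pose proof (in_Zq q a Hin) as Ha.
  set (g := Z.gcd a (Z.of_nat q)).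
  assert (Hg : (0 < g)%Z).
  { assert (0 <= g)%Z by apply Z.gcd_nonneg.
    assert (g <> 0%Z) by (intro H0; apply Z.gcd_eq_0 in H0; lia). lia. }
  assert (Hq1 : Z.of_nat q = (g * (Z.of_nat q / g))%Z).
  { apply Z_div_exact_full_2; [lia|]. apply Z.mod_divide; [lia|]. apply Z.gcd_divide_r. }
  assert (Ha1 : a = (g * (a / g))%Z).
  { apply Z_div_exact_full_2; [lia|]. apply Z.mod_divide; [lia|]. apply Z.gcd_divide_l. }
  assert (Hden : Z.of_nat (denom q a) = (Z.of_nat q / g)%Z).
  { unfold denom. fold g. apply Z2Nat.id. nia. }
  exists (Z.to_nat g), (a / g)%Z. rewrite Z2Nat.id by lia.
  split; [lia|]. split; [|split; [exact Ha1|split]].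
  - apply Nat2Z.inj. rewrite Nat2Z.inj_mul, Z2Nat.id, Hden by lia. exact Hq1.
  - rewrite Hden. nia.
  - rewrite Hden. apply Z.gcd_div_gcd; [lia|reflexivity].
Qed.

Section AdmissibleExponent.

Variables (n : nat) (Q : zpoly) (beta C : R).
Hypothesis admissible : forall (q : nat) (a : Z) (av : list Z),
  (1 <= q)%nat -> in_Uq q a -> In av (Zqn n q) -> Rpower (INR q) beta * F_abs n Q q a av <= C.

Lemma admissible_const_nonneg : 0 <= C.
Proof.
  assert (Hu : in_Uq 1 0) by (split; [simpl; lia|reflexivity]).
  pose proof (admissible 1 0 (repeat 0%Z n) (le_n 1) Hu (zero_in_Zqn n 1 (le_n 1))) as H.
  assert (0 <= Rpower (INR 1) beta * F_abs n Q 1 0 (repeat 0%Z n)).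
  { apply Rmult_le_pos; [left; apply exp_pos|apply sqrt_pos]. }
  lra.
Qed.

Lemma F_abs_le_denom (q : nat) (a : Z) : (1 <= q)%nat -> In a (Zq q) ->
  F_abs n Q q a (repeat 0%Z n) <= C * / Rpower (INR (denom q a)) beta.
Proof.
  intros Hq Hin. destruct (lowest_terms q a Hq Hin) as (g & a' & Hg & Hqgd & Ha & Hu).
  set (d := denom q a) in *.
  assert (Hd : (1 <= d)%nat) by (destruct Hu; lia).
  assert (Hp : 0 < Rpower (INR d) beta) by apply exp_pos.
  rewrite Hqgd, Ha at 1. rewrite F_abs_lowest_terms by auto.
  apply Rmult_le_reg_l with (Rpower (INR d) beta); [exact Hp|].
  rewrite (Rmult_comm C), <- Rmult_assoc, Rinv_r, Rmult_1_l by lra.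
  apply admissible; auto using zero_in_Zqn.
Qed.

Lemma V_card_le_denom_sum (q : nat) (lam : Z) : (1 <= q)%nat ->
  INR q * INR (V_card n Q lam q)
  <= INR q ^ n * (C * sumR (fun a => / Rpower (INR (denom q a)) beta) (Zq q)).
Proof.
  intros Hq. rewrite V_card_characters, <- !sumR_scal by exact Hq.
  apply sumR_le_in. intros a Ha.
  apply Rle_trans with (INR q ^ n * F_abs n Q q a (repeat 0%Z n));
    [apply character_sum_le_F_abs; exact Hq|].
  apply Rmult_le_compat_l; [left; apply pow_lt, lt_0_INR; lia|].
  apply F_abs_le_denom; assumption.
Qed.

End AdmissibleExponent.

Lemma count_multiples m e : (1 <= m)%nat ->
  sumR (fun a => if Z.eqb (a mod Z.of_nat m) 0 then 1 else 0) (Zq (e * m)) = INR e.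
Proof.
  intros Hm. rewrite sum_Zq_periodic by (auto; intros x; rewrite Z.mod_mod by lia; reflexivity).
  replace (sumR _ (Zq m)) with 1; [ring|].
  unfold Zq. destruct m as [|m]; [lia|]. rewrite <- cons_seq. simpl map.
  rewrite sumR_cons, Zmod_0_l, (sumR_ext_in _ (fun _ => 0)), sumR_const; [simpl; ring|].
  intros x Hx. apply in_map_iff in Hx. destruct Hx as [j [<- Hj]]. apply in_seq in Hj.
  rewrite Z.mod_small by lia. destruct (Z.eqb_spec (Z.of_nat j) 0); [lia|reflexivity].
Qed.

(* At most e residues a in Z_q have reduced denominator e: such an a is a multiple of q/e. *)
Lemma denom_fiber_card q e : (1 <= q)%nat ->
  sumR (fun a => if Nat.eqb e (denom q a) then 1 else 0) (Zq q) <= INR e.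
Proof.
  intros Hq.
  assert (Hfiber : forall a, In a (Zq q) -> e = denom q a ->
                   q = (e * (q / e))%nat /\ (a mod Z.of_nat (q / e) = 0)%Z).
  { intros a Ha ->. destruct (lowest_terms q a Hq Ha) as (g & a' & Hg & Hqgd & Ha' & _).
    assert (Hqg : (q / denom q a)%nat = g).
    { rewrite Hqgd at 1. apply Nat.div_mul. intros H0. rewrite H0 in Hqgd. lia. }
    rewrite Hqg. split; [lia|]. rewrite Ha', Z.mul_comm. apply Z.mod_mul. lia. }
  destruct (Nat.eqb_spec q (e * (q / e))) as [E|E].
  - assert (Hm : (1 <= q / e)%nat) by (destruct (q / e)%nat; lia).
    apply Rle_trans with
      (sumR (fun a => if Z.eqb (a mod Z.of_nat (q / e)) 0 then 1 else 0) (Zq q)).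
    + apply sumR_le_in. intros a Ha. destruct (Nat.eqb_spec e (denom q a)) as [He|He].
      * destruct (Hfiber a Ha He) as [_ ->]. simpl. lra.
      * destruct (Z.eqb _ _); lra.
    + rewrite E at 1. rewrite count_multiples by auto. lra.
  - rewrite (sumR_ext_in _ (fun _ => 0)), sumR_const; [rewrite Rmult_0_r; apply pos_INR|].
    intros a Ha. destruct (Nat.eqb_spec e (denom q a)) as [He|]; [|reflexivity].
    destruct (Hfiber a Ha He). lia.
Qed.

Lemma sum_by_denom (w : nat -> R) q : (1 <= q)%nat -> (forall e, 0 <= w e) ->
  sumR (fun a => w (denom q a)) (Zq q) <= sumR (fun e => INR e * w e) (seq 1 q).
Proof.
  intros Hq Hw.
  rewrite (sumR_ext_in _ (fun a => sumR (fun e => if Nat.eqb e (denom q a) then w e else 0) (seq 1 q))).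
  2:{ intros a Ha. rewrite sumR_point_mass; [reflexivity|].
      destruct (lowest_terms q a Hq Ha) as (g & a' & Hg & Hqgd & _ & Hu). destruct Hu. nia. }
  rewrite sumR_swap. apply sumR_le_in. intros e _.
  rewrite (sumR_ext_in _ (fun a => w e * (if Nat.eqb e (denom q a) then 1 else 0)))
    by (intros; destruct (Nat.eqb _ _); ring).
  rewrite sumR_scal, Rmult_comm. apply Rmult_le_compat_r; auto using denom_fiber_card.
Qed.

Lemma ln_le_sub1 z : 0 < z -> ln z <= z - 1.
Proof. intros Hz. pose proof (exp_ineq1_le (ln z)) as H. rewrite exp_ln in H; lra. Qed.

(* Comparison with the integral of t^(-1-eps) over [x, x+1]:
   y^(-1-eps) <= (x^(-eps) - y^(-eps)) / eps  for y = x + 1. *)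
Lemma series_term_le eps x : 0 < eps -> 1 <= x ->
  (x + 1) * / Rpower (x + 1) (2 + eps) <= / eps * (/ Rpower x eps - / Rpower (x + 1) eps).
Proof.
  intros He Hx. set (y := x + 1).
  assert (Hy : 0 < y) by (unfold y; lra).
  assert (Rx : 0 < Rpower x eps) by apply exp_pos.
  assert (Ry : 0 < Rpower y eps) by apply exp_pos.
  assert (E2 : Rpower y (2 + eps) = y ^ 2 * Rpower y eps).
  { rewrite Rpower_plus. replace 2 with (INR 2) by (simpl; ring). rewrite Rpower_pow; auto. }
  (* (y/x)^eps >= 1 + eps (1 - x/y), from exp t >= 1 + t and ln (x/y) <= x/y - 1 *)
  assert (Key : Rpower x eps * (1 + eps * / y) <= Rpower y eps).
  { unfold Rpower. replace (eps * ln y) with (eps * ln x + eps * (ln y - ln x)) by ring.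
    rewrite exp_plus. apply Rmult_le_compat_l; [left; apply exp_pos|].
    apply Rle_trans with (1 + eps * (ln y - ln x)); [|apply exp_ineq1_le].
    assert (Hln : ln (x * / y) <= x * / y - 1)
      by (apply ln_le_sub1, Rmult_lt_0_compat; [lra|apply Rinv_0_lt_compat; lra]).
    rewrite ln_mult, ln_Rinv in Hln by (try apply Rinv_0_lt_compat; lra).
    assert (x * / y - 1 = - / y) by (unfold y; field; lra).
    nra. }
  rewrite E2.
  apply Rmult_le_reg_l with (eps * y * Rpower x eps * Rpower y eps);
    [repeat apply Rmult_lt_0_compat; lra|].
  replace (eps * y * Rpower x eps * Rpower y eps * (y * / (y ^ 2 * Rpower y eps)))
    with (eps * Rpower x eps) by (field; lra).
  replace (eps * y * Rpower x eps * Rpower y eps * (/ eps * (/ Rpower x eps - / Rpower y eps)))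
    with (y * (Rpower y eps - Rpower x eps)) by (field; lra).
  assert (Rpower x eps * (1 + eps * / y) * y = Rpower x eps * y + eps * Rpower x eps)
    by (field; lra).
  nra.
Qed.

Lemma series_partial_sum eps q : 0 < eps -> (1 <= q)%nat ->
  sumR (fun e => INR e * / Rpower (INR e) (2 + eps)) (seq 1 q)
  <= 1 + / eps - / eps * / Rpower (INR q) eps.
Proof.
  intros He Hq. induction q as [|q IH]; [lia|]. destruct q as [|q].
  - simpl. rewrite sumR_cons, sumR_nil. change (INR 1) with 1. unfold Rpower.
    rewrite ln_1, !Rmult_0_r, exp_0, !Rinv_1. lra.
  - rewrite seq_S, sumR_app, sumR_cons, sumR_nil. specialize (IH ltac:(lia)).
    replace (1 + S q)%nat with (S (S q)) by lia. rewrite (S_INR (S q)).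
    assert (1 <= INR (S q)) by (rewrite S_INR; pose proof (pos_INR q); lra).
    pose proof (series_term_le eps (INR (S q)) He H). lra.
Qed.

Lemma series_bound eps q : 0 < eps -> (1 <= q)%nat ->
  sumR (fun e => INR e * / Rpower (INR e) (2 + eps)) (seq 1 q) <= 1 + / eps.
Proof.
  intros He Hq. pose proof (series_partial_sum eps q He Hq).
  assert (0 < / eps * / Rpower (INR q) eps)
    by (apply Rmult_lt_0_compat; apply Rinv_0_lt_compat; [auto|apply exp_pos]).
  lra.
Qed.

Lemma Rpower_one_minus_nat (x : R) (n : nat) : 0 < x -> Rpower x (1 - INR n) = x * / x ^ n.
Proof. intros Hx. unfold Rminus. rewrite Rpower_plus, Rpower_1, Rpower_Ropp, Rpower_pow; auto. Qed.

Theorem corollary3p3 (n : nat) (Q : zpoly) :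
  is_form n Q -> alpha_gt n Q 2 ->
  exists C : R, forall (q : nat) (lam : Z), (1 <= q)%nat ->
    Rpower (INR q) (1 - INR n) * INR (V_card n Q lam q) <= C.
Proof.
  intros _ [beta [Hbeta [_ [C Hadm]]]].
  set (eps := beta - 2). assert (Heps : 0 < eps) by (unfold eps; lra).
  pose proof (admissible_const_nonneg n Q beta C Hadm) as HC.
  exists (C * (1 + / eps)). intros q lam Hq.
  assert (Hq0 : 0 < INR q) by (apply lt_0_INR; lia).
  assert (Hqn : 0 < INR q ^ n) by (apply pow_lt; exact Hq0).
  assert (Hsum : sumR (fun a => / Rpower (INR (denom q a)) beta) (Zq q) <= 1 + / eps).
  { apply Rle_trans with (sumR (fun e => INR e * / Rpower (INR e) beta) (seq 1 q)).
    - apply (sum_by_denom (fun e => / Rpower (INR e) beta)); [exact Hq|].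
      intros e. left. apply Rinv_0_lt_compat, exp_pos.
    - replace beta with (2 + eps) by (unfold eps; ring). apply series_bound; assumption. }
  pose proof (V_card_le_denom_sum n Q beta C Hadm q lam Hq) as Hcount.
  rewrite Rpower_one_minus_nat by exact Hq0.
  apply Rmult_le_reg_l with (INR q ^ n); [exact Hqn|].
  replace (INR q ^ n * (INR q * / INR q ^ n * INR (V_card n Q lam q)))
    with (INR q * INR (V_card n Q lam q)) by (field; lra).
  apply Rle_trans with (1 := Hcount).
  apply Rmult_le_compat_l; [lra|]. apply Rmult_le_compat_l; assumption.
Qed.
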